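(* Let $X$ be a real Banach space, let $K\subseteq X$ be closed and nonempty, let $x\in X\setminus K$, and let $\overline{x}\in K$ be a nearest point to $x$ in $K$ (i.e. $\|x-\overline{x}\|=d_K(x)$). If the norm of $X$ is Gateaux differentiable at $x-\overline{x}$ and $d_{K}^{-}(x;x-\overline{x})=d_{K}(x)$, then $d_{K}$ is Gateaux differentiable at $x$.
   Context: For a nonempty subset $K$ of a real Banach space $(X,\|\cdot\|)$, $d_{K}(x)=\inf\{\|x-v\|: v\in K\}$. For $x,y\in X$, $d_{K}^{-}(x;y)=\liminf_{t\to 0^{+}}\frac{d_{K}(x+ty)-d_{K}(x)}{t}$. A function $f:X\to\mathbb{R}$ is Gateaux differentiable at $x$ if there is $A\in X^{*}$ with $A(y)=\lim_{t\to 0}\frac{f(x+ty)-f(x)}{t}$ for all $y\in X$; the norm is Gateaux differentiable at a nonzero $u$ if $v\mapsto\|v\|$ is Gateaux differentiable at $u$. *)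

From HB Require Import structures.
From mathcomp Require Import all_boot all_order all_algebra.
From mathcomp Require Import all_classical all_reals all_analysis.
Set Implicit Arguments. Unset Strict Implicit. Unset Printing Implicit Defensive.
Import Order.TTheory GRing.Theory Num.Theory.
Import numFieldNormedType.Exports.
Local Open Scope classical_set_scope.
Local Open Scope ring_scope.

Definition distK {R : realType} {X : normedModType R} (K : set X) (x : X) : R :=
  inf [set `|x - v| | v in K].

Definition distK_lower_dir {R : realType} {X : normedModType R}
    (K : set X) (x y : X) : \bar R :=
  limf_einf (fun t : R => ((distK K (x + t *: y) - distK K x) / t)%:E) (0%R)^'+.

Definition gateaux_differentiable {R : realType} {X : normedModType R}
    (f : X -> R) (x : X) : Prop :=
  exists A : X -> R,
    (forall (a : R) (u v : X), A (a *: u + v) = a * A u + A v) /\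
    continuous A /\
    forall y : X, (fun t : R => (f (x + t *: y) - f x) / t) @ (0%R)^' --> A y.

From HB Require Import structures.
From mathcomp Require Import all_boot all_order all_algebra.
From mathcomp Require Import all_classical all_reals all_analysis.
From mathcomp Require Import lra.
Import Order.TTheory GRing.Theory Num.Theory.
Import numFieldNormedType.Exports.
Local Open Scope classical_set_scope.
Local Open Scope ring_scope.

(* Put u := x - xbar, d := `|u| = d_K(x), and let A be the Gateaux derivative
   of the norm at u; A is also the derivative of d_K at x.  From above,
   d_K(x + t y) <= `|u + t y| = d + t A y + o(t).  From below, write t = s l
   with s = |t| / eps > 0 and |l| = eps for one fixed small eps.  Since d_K is
   1-Lipschitz, d_K(x + s u) <= d_K(x + t y) + s `|u - l y|; the hypothesis
   d_K^-(x; u) = d gives d_K(x + s u) >= d + s d - o(s), while differentiability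
   of the norm at the two points l = +-eps gives `|u - l y| <= d - l A y + eps e.
   Multiplying by s, d_K(x + t y) >= d + t A y - 2 e |t| - o(t). *)

Lemma cvg_quotient_dnbhs0P {R : realFieldType} {f : R -> R} {a : R} :
  (fun t => f t / t) @ 0^' --> a <->
  forall e, 0 < e -> \forall t \near 0^', `|f t - t * a| <= e * `|t|.
Proof.
have quotE t : t != 0 -> `|a - f t / t| = `|f t - t * a| / `|t|.
  by move=> t0; rewrite -normfV -normrM mulrBl [t * a]mulrC mulfK // distrC.
rewrite cvgrPdist_le; split=> + e e0 => /(_ e e0) near_e.
- near=> t; have t0 : t != 0 by near: t; exact: nbhs_dnbhs_neq.
  by rewrite -ler_pdivrMr ?normr_gt0 // -quotE //; near: t.
- near=> t; have t0 : t != 0 by near: t; exact: nbhs_dnbhs_neq.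
  by rewrite quotE // ler_pdivrMr ?normr_gt0 //; near: t.
Unshelve. all: by end_near. Qed.

Lemma near_at_right0_normr_div {R : realFieldType} {P : R -> Prop} {c : R} :
  0 < c -> (\forall s \near (0 : R)^'+, P s) -> \forall t \near (0 : R)^', P (`|t| / c).
Proof.
move=> c0 /nbhs_ballP [r r0 Pr]; apply/nbhs_ballP.
exists (r * c); first exact: mulr_gt0.
move=> t; rewrite /ball /= !sub0r !normrN => tr t0.
apply: Pr; last by rewrite divr_gt0 ?normr_gt0.
by rewrite /ball /= sub0r normrN normrM normr_id normfV (gtr0_norm c0) ltr_pdivrMr.
Qed.

Lemma limf_einf_gt {R : realType} {T : choiceType} {X : filteredType T}
    {F : set_system X} {FF : Filter F} {f : X -> \bar R} {a : \bar R} :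
  (a < limf_einf f F)%E -> \forall s \near F, (a < f s)%E.
Proof.
rewrite limf_einfE => /ereal_sup_gt [_ [V FV <-]] aV.
apply: filterS FV => s Vs; apply: (lt_le_trans aV).
by apply: ereal_inf_lbound; exists s.
Qed.

Lemma linear_functional_oppr {R : ringType} {X : lmodType R} {A : X -> R} :
  (forall (a : R) (u v : X), A (a *: u + v) = a * A u + A v) ->
  forall y, A (- y) = - A y.
Proof.
move=> Alin y; have A0 : A 0 = 0.
  have := Alin 1 0 0; rewrite scaler0 add0r mul1r => A0D.
  by apply: (addrI (A 0)); rewrite -A0D addr0.
by rewrite -scaleN1r -[_ *: y]addr0 Alin A0 addr0 mulN1r.
Qed.

Section distance_function.
Context {R : realType} {X : normedModType R} {K : set X}.

Lemma distK_le_norm (z : X) {v : X} : K v -> distK K z <= `|z - v|.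
Proof.
move=> Kv; apply: ge_inf; last by exists v.
by exists 0 => _ [w _ <-]; exact: normr_ge0.
Qed.

Lemma distK_lipschitz (a b : X) : K !=set0 -> distK K a <= distK K b + `|a - b|.
Proof.
move=> [v Kv]; rewrite -lerBlDr; apply: lb_le_inf; first by exists `|b - v|, v.
move=> _ [w Kw <-]; rewrite lerBlDr [_ + `|a - b|]addrC.
apply: (le_trans (distK_le_norm a Kw)).
have -> : a - w = (a - b) + (b - w) by rewrite addrA subrK.
exact: ler_normD.
Qed.

Lemma distK_scale_le (z v w : X) (s : R) : K !=set0 -> 0 <= s ->
  distK K (z + s *: v) <= distK K (z + s *: w) + s * `|v - w|.
Proof.
move=> K0 s0; rewrite -[s in s * _]ger0_norm // -normrZ scalerBr.
have -> : s *: v - s *: w = z + s *: v - (z + s *: w).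
  by rewrite opprD addrACA subrr add0r.
exact: distK_lipschitz.
Qed.

End distance_function.

Section nearest_point.
Context {R : realType} {X : normedModType R} {K : set X} {x xbar : X} {A : X -> R}.
Hypotheses (Kxbar : K xbar) (xbar_nearest : `|x - xbar| = distK K x).
Hypothesis norm_quotient :
  forall y, (fun t => (`|x - xbar + t *: y| - `|x - xbar|) / t) @ 0^' --> A y.

Lemma distK_quotient_upper (y : X) (e : R) : 0 < e ->
  \forall t \near 0^', distK K (x + t *: y) - distK K x - t * A y <= e * `|t|.
Proof.
move=> e0; have /cvg_quotient_dnbhs0P/(_ e e0) := norm_quotient y.
apply: filterS => t; rewrite xbar_nearest ler_norml => /andP [_ norm_le].
have := distK_le_norm (x + t *: y) Kxbar; rewrite addrAC; lra.
Qed.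

Hypothesis A_oppr : forall y, A (- y) = - A y.
Hypothesis lower_dir : distK_lower_dir K x (x - xbar) = (distK K x)%:E.

Lemma distK_quotient_lower (y : X) (e : R) : 0 < e ->
  \forall t \near 0^', t * A y - (distK K (x + t *: y) - distK K x) <= e * `|t|.
Proof.
move=> e0; set d := distK K x; set u := x - xbar.
have e20 : 0 < e / 2 by rewrite divr_gt0.
have /cvg_quotient_dnbhs0P/(_ _ e20)/nbhs_ballP [r /= r0 norm_near] :=
  norm_quotient (- y).
set eps := r / 2.
have eps0 : 0 < eps by rewrite divr_gt0.
have ray : \forall s \near 0^'+, d - eps * (e / 2) < (distK K (x + s *: u) - d) / s.
  have : ((d - eps * (e / 2))%:E < distK_lower_dir K x u)%E.
    by rewrite lower_dir lte_fin gtrDl oppr_lt0 mulr_gt0.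
  by move/limf_einf_gt; apply: filterS => s; rewrite lte_fin.
near=> t.
have ray_t : d - eps * (e / 2) <
    (distK K (x + (`|t| / eps) *: u) - d) / (`|t| / eps).
  by near: t; exact: near_at_right0_normr_div eps0 ray.
have t0 : t != 0 by near: t; exact: nbhs_dnbhs_neq.
set s := `|t| / eps in ray_t *.
have s0 : 0 < s by rewrite divr_gt0 ?normr_gt0.
set l := t / s.
have s_l : s * l = t by rewrite /l mulrC divfK ?gt_eqF.
have s_eps : s * eps = `|t| by rewrite /s divfK ?gt_eqF.
have l_eps : `|l| = eps.
  by apply: (mulfI (lt0r_neq0 s0)); rewrite -{1}(gtr0_norm s0) -normrM s_l s_eps.
clearbody l s.
have lip : distK K (x + s *: u) <= distK K (x + t *: y) + s * `|u - l *: y|.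
  rewrite -s_l -scalerA; apply: distK_scale_le (ltW s0).
  by exists xbar.
have l0 : l != 0 by rewrite -normr_eq0 l_eps gt_eqF.
have eps_r : eps < r by rewrite /eps; lra.
have := norm_near l; rewrite /ball /= sub0r normrN l_eps => /(_ eps_r l0).
rewrite -/u xbar_nearest -/d A_oppr scalerN ler_norml => /andP [_ norm_le].
have norm_s : s * `|u - l *: y| <= s * d - t * A y + e / 2 * `|t|.
  by rewrite -s_eps -s_l; nra.
have ray_s : s * d - e / 2 * `|t| < distK K (x + s *: u) - d.
  by rewrite -s_eps; move: ray_t; rewrite ltr_pdivlMr //; lra.
lra.
Unshelve. all: by end_near. Qed.

End nearest_point.

Theorem corollary2 (R : realType) (X : completeNormedModType R)
  (K : set X) (x xbar : X) :
  closed K -> K !=set0 -> ~ K x ->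
  K xbar -> `|x - xbar| = distK K x ->
  gateaux_differentiable (fun v : X => `|v|) (x - xbar) ->
  distK_lower_dir K x (x - xbar) = (distK K x)%:E ->
  gateaux_differentiable (distK K) x.
Proof.
move=> _ _ _ Kxbar xbar_nearest [A [Alin [Acont norm_quotient]]] lower_dir.
exists A; do 2!split => //.
move=> y; apply/cvg_quotient_dnbhs0P => e e0.
have A_oppr := linear_functional_oppr Alin.
move: (distK_quotient_upper Kxbar xbar_nearest norm_quotient y e e0)
  (distK_quotient_lower Kxbar xbar_nearest norm_quotient A_oppr lower_dir y e e0).
apply: filterS2 => t upper lower.
by rewrite ler_norml; apply/andP; split; lra.
Qed.
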